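(* Let $G:[0,1]\to\mathbb R$ be convex and differentiable on $(0,1)$, and let $0\le a\le b\le1$. Then: (i) $\frac12\big(D_G(a\parallel x)+D_G(b\parallel x)\big)\ge\mathrm{JB}_G(a,b)$ for every $x\in[0,1]$; (ii) (reverse triangle inequality) for every $x\in[a,b]$, $\mathrm{JB}_G(a,x)+\mathrm{JB}_G(x,b)\le\mathrm{JB}_G(a,b)$; (iii) for all $a\le a'\le b'\le b$, $\mathrm{JB}_G(a',b')\le\mathrm{JB}_G(a,b)$; (iv) for every random variable $X$ supported on $[a,b]$, $\mathbb E[D_G(X\parallel\mathbb E[X])]=\mathbb E[G(X)]-G(\mathbb E[X])\le 2\,\mathrm{JB}_G(a,b)$.
   Context: $D_G(y\parallel x)=G(y)-G(x)-(y-x)G'(x)$ (Bregman divergence; one-sided derivatives at endpoints). $\mathrm{JB}_G(a,b)=\frac{G(a)+G(b)}2-G\!\left(\frac{a+b}2\right)$ (Jensen–Bregman divergence). *)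

From HB Require Import structures.
From mathcomp Require Import all_boot all_order all_algebra.
From mathcomp Require Import all_classical all_reals all_analysis.
Set Implicit Arguments. Unset Strict Implicit. Unset Printing Implicit Defensive.
Import Order.TTheory GRing.Theory Num.Theory.
Import numFieldNormedType.Exports.
Local Open Scope classical_set_scope.
Local Open Scope ring_scope.

Definition convex_on01 {R : realType} (G : R -> R) : Prop :=
  forall x y t : R, 0 <= x <= 1 -> 0 <= y <= 1 -> 0 <= t <= 1 ->
    G (t * x + (1 - t) * y) <= t * G x + (1 - t) * G y.

(* For 0 < x < 1 this is the ordinary derivative; at
   x = 0 (resp. x = 1) it is the right (resp. left) one-sided derivative. *)
Definition is_deriv01 {R : realType} (G : R -> R) (x s : R) : Prop :=
  0 <= x <= 1 /\
  (fun y => (G y - G x) / (y - x)) @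
     within [set y : R | 0 <= y <= 1 /\ y != x] (nbhs x) --> s.

(* Bregman divergence D_G(y || x), where s = G'(x). *)
Definition bregman {R : realType} (G : R -> R) (y x s : R) : R :=
  G y - G x - (y - x) * s.

Definition JB {R : realType} (G : R -> R) (a b : R) : R :=
  (G a + G b) / 2 - G ((a + b) / 2).

(* The three-chord inequality for a convex G is the only ingredient.  In the
   symmetric form G p + G (m1 + m2 - p) <= G m1 + G m2 for m1 <= p <= m2, taken
   with p = (a+b)/2 it gives JB >= 0, and with (m1, p, m2) =
   ((a+x)/2, x, (x+b)/2) the reverse triangle inequality (ii); (iii) follows
   from (ii) and JB >= 0.  Difference quotients of G are monotone, so G lies
   above its tangent at x with slope the relative derivative s, i.e. Bregman
   divergences are nonnegative; at (a+b)/2 this is (i).  For (iv), linearity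
   gives E[D_G(X || EX)] = E[G X] - G(EX); as X lives in [a, b], G X lies
   below the secant of G over [a, b], so this gap is at most the distance from
   the secant to the graph at EX, which is at most 2 JB(a, b). *)

From HB Require Import structures.
From mathcomp Require Import all_boot all_order all_algebra.
From mathcomp Require Import all_classical all_reals all_analysis.
From mathcomp Require Import ring lra measurable_realfun.
Import Order.TTheory GRing.Theory Num.Theory.
Import numFieldNormedType.Exports.
Local Open Scope classical_set_scope.
Local Open Scope ring_scope.

Set Implicit Arguments. Unset Strict Implicit.

Section convex_on01.
Variables (R : realType) (G : R -> R).
Hypothesis convG : convex_on01 G.

Lemma convex01_le_secant u v w : 0 <= u -> u <= v -> v <= w -> w <= 1 ->
  (w - u) * G v <= (w - v) * G u + (v - u) * G w.
Proof.
move=> u0 uv vw w1; have [uw|wu] := ltP u w; last first.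
  have eu : u = w by apply/le_anti; rewrite (le_trans uv vw) wu.
  have ev : v = u by apply/le_anti; rewrite uv eu vw.
  by rewrite ev eu !subrr !mul0r addr0.
have wu0 : 0 < w - u by rewrite subr_gt0.
pose t := (w - v) / (w - u).
have vE : v = t * u + (1 - t) * w by rewrite /t; field; lra.
have t01 : 0 <= t <= 1 by rewrite divr_ge0 ?ler_pdivrMr //=; lra.
have -> : (w - v) * G u + (v - u) * G w = (w - u) * (t * G u + (1 - t) * G w).
  by rewrite /t; field; lra.
by rewrite ler_pM2l // {1}vE; apply: convG => //; lra.
Qed.

Lemma convex01_pair_le m1 p m2 : 0 <= m1 -> m1 <= p -> p <= m2 -> m2 <= 1 ->
  G p + G (m1 + m2 - p) <= G m1 + G m2.
Proof.
move=> m10 m1p pm2 m21; have [m12|m21'] := ltP m1 m2; last first.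
  have e1 : m1 = m2 by apply/le_anti; rewrite (le_trans m1p pm2) m21'.
  have ep : p = m1 by apply/le_anti; rewrite m1p e1 pm2.
  by rewrite ep e1 addrK.
have Hp := convex01_le_secant m10 m1p pm2 m21.
have Hq := @convex01_le_secant m1 (m1 + m2 - p) m2 m10 ltac:(lra) ltac:(lra) m21.
by rewrite -(ler_pM2l (_ : 0 < m2 - m1)) ?subr_gt0 //; lra.
Qed.

Lemma JB_ge0 u v : 0 <= u -> u <= v -> v <= 1 -> 0 <= JB G u v.
Proof.
move=> u0 uv v1.
have := @convex01_pair_le u ((u + v) / 2) v u0 ltac:(lra) ltac:(lra) v1.
have -> : u + v - (u + v) / 2 = (u + v) / 2 by field.
by rewrite /JB; lra.
Qed.

Lemma JB_split_le a x b : 0 <= a -> a <= x -> x <= b -> b <= 1 ->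
  JB G a x + JB G x b <= JB G a b.
Proof.
move=> a0 ax xb b1.
have := @convex01_pair_le ((a + x) / 2) x ((x + b) / 2)
  ltac:(lra) ltac:(lra) ltac:(lra) ltac:(lra).
have -> : (a + x) / 2 + (x + b) / 2 - x = (a + b) / 2 by field.
by rewrite /JB; lra.
Qed.

Lemma JB_le_subinterval a a' b' b :
  0 <= a -> a <= a' -> a' <= b' -> b' <= b -> b <= 1 -> JB G a' b' <= JB G a b.
Proof.
move=> a0 aa' a'b' b'b b1.
have := @JB_split_le a b' b a0 ltac:(lra) b'b b1.
have := @JB_split_le a a' b' a0 aa' a'b' ltac:(lra).
have := @JB_ge0 b' b ltac:(lra) b'b b1.
have := @JB_ge0 a a' a0 aa' ltac:(lra).
lra.
Qed.

(* The secant of [a, b] exceeds the graph at m by at most 2 JB(a, b): on the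
   half of [a, b] containing m, compare with the chord through the midpoint. *)
Lemma secant_gap_le_JB a m b : 0 <= a -> a <= m -> m <= b -> b <= 1 ->
  (b - m) * G a + (m - a) * G b - (b - a) * G m <= (b - a) * (2 * JB G a b).
Proof.
move=> a0 am mb b1; have JB0 := JB_ge0 a0 (le_trans am mb) b1.
rewrite /JB in JB0 *; set c := (a + b) / 2 in JB0 *.
have [mc|cm] := leP m c.
  have := @convex01_le_secant m c b ltac:(lra) mc ltac:(rewrite /c; lra) b1.
  have : (m - a) * (2 * G c) <= (m - a) * (G a + G b) by apply: ler_wpM2l; lra.
  by rewrite /c; nra.
have := @convex01_le_secant a c m a0 ltac:(rewrite /c; lra) (ltW cm) ltac:(lra).
have : (b - m) * (2 * G c) <= (b - m) * (G a + G b) by apply: ler_wpM2l; lra.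
by rewrite /c; nra.
Qed.

Lemma affine_majorant_gap a m b : 0 <= a -> a <= m -> m <= b -> b <= 1 ->
  exists al be : R, (forall y, a <= y <= b -> G y <= al + be * y) /\
    al + be * m - G m <= 2 * JB G a b.
Proof.
move=> a0 am mb b1; have [ab|ba] := ltP a b; last first.
  have ea : a = b by apply/le_anti; rewrite (le_trans am mb) ba.
  have em : m = a by apply/le_anti; rewrite am ea mb.
  exists (G a), 0; split.
    move=> y /andP[ay yb]; have -> : y = a by apply/le_anti; rewrite ay ea yb.
    by rewrite mul0r addr0.
  by rewrite em mul0r addr0 subrr mulr_ge0 // JB_ge0 // -ea.
have ba0 : 0 < b - a by rewrite subr_gt0.
pose be := (G b - G a) / (b - a); exists (G a - be * a), be.
have secantE y : G a - be * a + be * y = ((b - y) * G a + (y - a) * G b) / (b - a).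
  by rewrite /be; field; lra.
split=> [y /andP[ay yb]|]; rewrite secantE.
  by rewrite ler_pdivlMr //; have := convex01_le_secant a0 ay yb b1; lra.
rewrite lerBlDr ler_pdivrMr //.
by have := secant_gap_le_JB a0 am mb b1; lra.
Qed.

Lemma convex01_slope_le x z y : 0 <= x <= 1 -> 0 <= z -> z < y -> y <= 1 ->
  z != x -> y != x -> (G z - G x) / (z - x) <= (G y - G x) / (y - x).
Proof.
move=> /andP[x0 x1] z0 zy y1 zx yx.
have zx0 : z - x != 0 by rewrite subr_eq0.
have yx0 : y - x != 0 by rewrite subr_eq0.
rewrite -subr_le0.
have -> : (G z - G x) / (z - x) - (G y - G x) / (y - x) =
  ((G z - G x) * (y - x) - (G y - G x) * (z - x)) / ((z - x) * (y - x)).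
  by field; apply/andP.
have [xz|zx'] := ltP x z.
  have := convex01_le_secant x0 (ltW xz) (ltW zy) y1.
  by rewrite ler_pdivrMr ?mul0r; [nra | apply: mulr_gt0; lra].
have {}zx : z < x by rewrite lt_neqAle zx zx'.
have [xy|yx'] := ltP x y.
  have := convex01_le_secant z0 (ltW zx) (ltW xy) y1.
  by rewrite ler_ndivrMr ?mul0r; [nra | rewrite nmulr_rlt0; lra].
have {}yx : y < x by rewrite lt_neqAle yx yx'.
have := convex01_le_secant z0 (ltW zy) (ltW yx) x1.
by rewrite ler_pdivrMr ?mul0r; [nra | rewrite nmulr_rgt0; lra].
Qed.

Lemma proper_within_punctured01 (x : R) : 0 <= x <= 1 ->
  ProperFilter (within [set y : R | 0 <= y <= 1 /\ y != x] (nbhs x)).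
Proof.
move=> /andP[x0 x1]; apply: within_nbhs_proper => B /nbhs_ballP[e /= e0 sB].
pose d := Num.min e (1/2) / 2.
have d0 : 0 < d by rewrite /d divr_gt0 // lt_min e0 /=; lra.
have mine : Num.min e (1/2) <= e by rewrite ge_min lexx.
have minh : Num.min e (1/2) <= 1/2 by rewrite ge_min lexx orbT.
have de : d < e by rewrite /d ltr_pdivrMr //; lra.
have d1 : d <= 1/4 by rewrite /d ler_pdivrMr //; lra.
have [xh|xh] := leP x (1/2).
  exists (x + d); split.
    by split; [apply/andP; split; lra | rewrite -subr_eq0 addrC addKr gt_eqF].
  apply: sB; rewrite -ball_normE /ball_ /=.
  by rewrite opprD addrA subrr add0r normrN gtr0_norm.
exists (x - d); split.
  by split; [apply/andP; split; lra | rewrite -subr_eq0 addrC addKr oppr_eq0 gt_eqF].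
by apply: sB; rewrite -ball_normE /ball_ /= opprB addrC subrK gtr0_norm.
Qed.

(* The difference quotient at x is monotone in y, so its limit s is bounded
   by every quotient to the right of x and bounds every quotient to its left. *)
Lemma bregman_ge0 x s y : is_deriv01 G x s -> 0 <= y <= 1 -> 0 <= bregman G y x s.
Proof.
move=> [x01 cvg_s] /andP[y0 y1]; have PF := proper_within_punctured01 x01.
rewrite /bregman subr_ge0 lerBrDl.
have [yx|xy|<-] := ltgtP y x; last by rewrite subrr mul0r addr0.
- have : (G y - G x) / (y - x) <= s.
    apply: (closed_cvg _ (@closed_ge _ _) _ _ cvg_s).
    apply/nbhs_ballP; exists (x - y) => /=; first by rewrite subr_gt0.
    move=> t; rewrite -ball_normE /ball_ /= ltr_norml => tx [/andP[t0 t1] tx'].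
    by apply: convex01_slope_le => //; [lra | rewrite lt_eqF].
  by rewrite ler_ndivrMr ?subr_lt0 //; lra.
- have : s <= (G y - G x) / (y - x).
    apply: (closed_cvg _ (@closed_le _ _) _ _ cvg_s).
    apply/nbhs_ballP; exists (y - x) => /=; first by rewrite subr_gt0.
    move=> t; rewrite -ball_normE /ball_ /= ltr_norml => tx [/andP[t0 t1] tx'].
    by apply: convex01_slope_le => //; [lra | rewrite gt_eqF].
  by rewrite ler_pdivlMr ?subr_gt0 //; lra.
Qed.

(* The two Bregman divergences average to JB(a, b) plus D((a+b)/2 || x). *)
Lemma JB_le_bregman_mean a b x s :
  is_deriv01 G x s -> 0 <= a -> a <= b -> b <= 1 ->
  JB G a b <= (bregman G a x s + bregman G b x s) / 2.
Proof.
move=> Gx a0 ab b1.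
have := @bregman_ge0 x s ((a + b) / 2) Gx ltac:(apply/andP; lra).
by rewrite /JB /bregman; lra.
Qed.

Lemma convex01_norm_le y : 0 <= y <= 1 ->
  `|G y| <= `|G 0| + `|G 1| + 2 * `|G (1/2)|.
Proof.
move=> /andP[y0 y1].
have Gub z : 0 <= z <= 1 -> G z <= `|G 0| + `|G 1|.
  move=> /andP[z0 z1]; have := convG (t := z) (x := 1) (y := 0).
  rewrite mulr1 mulr0 addr0 => /(_ ltac:(lra) ltac:(lra) ltac:(lra)) Gz.
  have : z * G 1 <= z * `|G 1| by rewrite ler_wpM2l // ler_norm.
  have : (1 - z) * G 0 <= (1 - z) * `|G 0| by rewrite ler_wpM2l ?ler_norm //; lra.
  by have := normr_ge0 (G 0); have := normr_ge0 (G 1); nra.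
have Ghalf : G (1/2) <= (G y + G (1 - y)) / 2.
  have := convG (t := 1/2) (x := y) (y := 1 - y).
  have -> : 1/2 * y + (1 - 1/2) * (1 - y) = 1/2 by field.
  by move=> /(_ ltac:(lra) ltac:(lra) ltac:(lra)); lra.
have := Gub y ltac:(lra); have := Gub (1 - y) ltac:(lra).
have := ler_norm (G (1/2)); have : - `|G (1/2)| <= G (1/2).
  by rewrite lerNl -normrN ler_norm.
by rewrite ler_norml; move=> *; apply/andP; split; lra.
Qed.

End convex_on01.

Lemma derivable01_measurable_fun (R : realType) (G : R -> R) :
  (forall x : R, 0 < x < 1 -> derivable G x 1) ->
  measurable_fun (`]0, 1[ `|` ([set 0] `|` [set 1]) : set R) G.
Proof.
move=> dG; apply/measurable_funU => //; first exact: measurableU.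
split; last by apply/measurable_funU => //; split; exact: measurable_fun_set1.
apply: open_continuous_measurable_fun; first exact: interval_open.
move=> x; rewrite inE /= in_itv /= => x01.
by apply/differentiable_continuous; rewrite -derivable1_diffP; exact: dG.
Qed.

Section expectation.
Context (d : measure_display) (T : measurableType d) (R : realType).
Variable P : probability T R.
Local Open Scope ereal_scope.

Lemma bounded_Lfun1 (f : T -> R) (M : R) : measurable_fun setT f ->
  (forall w, (`|f w| <= M)%R) -> f \in Lfun P 1.
Proof.
move=> mf fM; apply/Lfun1_integrable/measurable_bounded_integrable => //.
  by rewrite (le_lt_trans (probability_le1 P measurableT)) ?ltry.
exists M; split=> [|r Mr w _]; first exact: num_real.
exact: le_trans (fM w) (ltW Mr).
Qed.

Lemma expectation_le_Lfun1 (X Y : T -> R) : X \in Lfun P 1 -> Y \in Lfun P 1 ->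
  (forall w, (X w <= Y w)%R) -> 'E_P[X] <= 'E_P[Y].
Proof.
move=> /Lfun1_integrable iX /Lfun1_integrable iY XY.
by rewrite unlock; apply: le_integral => // w _; rewrite lee_fin.
Qed.

Let affineE (X : T -> R) (c k : R) :
  (fun w => c + k * X w)%R = (cst c \+ (k \o* X))%R.
Proof. by apply/funext => w /=; rewrite mulrC. Qed.

Lemma Lfun1_affine (X : T -> R) (c k : R) : X \in Lfun P 1 ->
  (fun w => c + k * X w)%R \in Lfun P 1.
Proof. by move=> LX; rewrite affineE rpredD ?Lfun_cst ?Lfun_scale. Qed.

Lemma expectation_affine (X : T -> R) (c k : R) : X \in Lfun P 1 ->
  'E_P[fun w => (c + k * X w)%R] = c%:E + k%:E * 'E_P[X].
Proof.
move=> LX; rewrite affineE.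
by rewrite expectationD ?expectation_cst ?expectationZl ?Lfun_cst ?Lfun_scale.
Qed.

Lemma derivable01_comp_Lfun1 (G : R -> R) (X : T -> R) : convex_on01 G ->
  (forall x : R, (0 < x < 1)%R -> derivable G x 1) ->
  measurable_fun setT X -> (forall w, (0 <= X w <= 1)%R) -> G \o X \in Lfun P 1.
Proof.
move=> convG dG mX X01; apply: bounded_Lfun1 => [|w]; last first.
  exact: convex01_norm_le.
apply: measurable_comp (derivable01_measurable_fun dG) mX.
  by apply: measurableU => //; exact: measurableU.
move=> _ [w _ <-]; have /andP[] := X01 w.
rewrite le_eqVlt => /orP[/eqP <-|X0]; first by right; left.
rewrite le_eqVlt => /orP[/eqP ->|X1]; first by right; right.
by left; rewrite /= in_itv /= X0 X1.
Qed.

Section bounded_random_variable.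
Variables (X : T -> R) (a b : R).
Hypotheses (LX : X \in Lfun P 1) (Xab : forall w, (a <= X w <= b)%R).

Let m := fine 'E_P[X].

Let EXE : 'E_P[X] = m%:E.
Proof. by rewrite /m fineK // expectation_fin_num. Qed.

Lemma expectation_itv : (a <= m <= b)%R.
Proof.
rewrite -!lee_fin -EXE -(expectation_cst P a) -(expectation_cst P b).
by apply/andP; split; apply: expectation_le_Lfun1; rewrite ?Lfun_cst // => w;
  have /andP[] := Xab w.
Qed.

Lemma expectation_bregman (G : R -> R) (s : R) : G \o X \in Lfun P 1 ->
  'E_P[fun w => bregman G (X w) m s] = 'E_P[G \o X] - (G m)%:E.
Proof.
move=> LGX.
have -> : (fun w => bregman G (X w) m s) =
    (G \o X \- (fun w => G m - m * s + s * X w))%R.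
  by apply/funext => w; rewrite /bregman /=; ring.
rewrite expectationB ?Lfun1_affine // expectation_affine // EXE.
by rewrite -EFinM -EFinD; congr (_ - _%:E); ring.
Qed.

Lemma expectation_jensen_gap_le (G : R -> R) : convex_on01 G ->
  (0 <= a)%R -> (b <= 1)%R -> G \o X \in Lfun P 1 ->
  'E_P[G \o X] - (G m)%:E <= (2 * JB G a b)%:E.
Proof.
move=> convG a0 b1 LGX; have /andP[am mb] := expectation_itv.
have [al [be [Gle gap]]] := affine_majorant_gap convG a0 am mb b1.
have : 'E_P[G \o X] <= 'E_P[fun w => (al + be * X w)%R].
  by apply: expectation_le_Lfun1 => // [|w]; [exact: Lfun1_affine | exact: Gle].
rewrite expectation_affine // EXE -EFinM -EFinD.
rewrite -(fineK (expectation_fin_num LGX)) -EFinB !lee_fin; lra.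
Qed.

End bounded_random_variable.
End expectation.

Theorem propositionC1 (R : realType) (G : R -> R) (a b : R) :
  convex_on01 G ->
  (forall x : R, 0 < x < 1 -> derivable G x 1) ->
  0 <= a -> a <= b -> b <= 1 ->
  (* (i) *)
  (forall x s : R, is_deriv01 G x s ->
     JB G a b <= (bregman G a x s + bregman G b x s) / 2) /\
  (* (ii) reverse triangle inequality *)
  (forall x : R, a <= x <= b -> JB G a x + JB G x b <= JB G a b) /\
  (* (iii) *)
  (forall a' b' : R, a <= a' -> a' <= b' -> b' <= b -> JB G a' b' <= JB G a b) /\
  (* (iv) *)
  (forall (d : measure_display) (T : measurableType d) (P : probability T R)
          (X : {RV P >-> R}),
     (forall w : T, a <= X w <= b) ->
     forall s : R, is_deriv01 G (fine 'E_P[X])%E s ->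
       ('E_P[fun w => bregman G (X w) (fine 'E_P[X]%E) s]
         = 'E_P[G \o X] - (G (fine 'E_P[X]%E))%:E)%E /\
       ('E_P[G \o X] - (G (fine 'E_P[X]%E))%:E <= (2 * JB G a b)%:E)%E).
Proof.
move=> convG dG a0 ab b1; split; [|split; [|split]].
- by move=> x s Gx; exact: JB_le_bregman_mean.
- by move=> x /andP[ax xb]; exact: JB_split_le.
- by move=> a' b' aa' a'b' b'b; exact: JB_le_subinterval.
move=> d T P X Xab s _.
have X01 w : 0 <= X w <= 1 by have /andP[] := Xab w; lra.
have mX : measurable_fun setT X := measurable_funP X.
have LX : (X : T -> R) \in Lfun P 1%E.
  apply: (bounded_Lfun1 P (M := 1) mX) => w.
  by have /andP[X0 X1] := X01 w; rewrite ger0_norm.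
have LGX := derivable01_comp_Lfun1 P convG dG mX X01.
by split; [exact: expectation_bregman | exact: expectation_jensen_gap_le].
Qed.
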